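(* Let $K$ be a field, $\Lambda=\mathrm{diag}(a_1,\dots,a_n)$ with $a_i\in K$, $P=(p_{st})\in GL_n(K)$, and $A=P^{-1}\Lambda P$. Then for each $t=1,\dots,n$, $$\Delta_t(A)=\delta(a_1,\dots,a_n)\,\frac{1}{\det P}\prod_{s=1}^n p_{st},$$ and consequently $$\Delta(A)=\delta(a_1,\dots,a_n)^n\,\frac{1}{(\det P)^n}\prod_{s=1}^n\prod_{t=1}^n p_{st}.$$
   Context: For $A\in M_n(K)$ and $t\in\{1,\dots,n\}$, $M_t(A)$ is the $n\times n$ matrix whose $j$-th column is the $t$-th column of $A^{j-1}$ ($j=1,\dots,n$, $A^0=I$); $\Delta_t(A)=\det M_t(A)$ and $\Delta(A)=\prod_{t=1}^n\Delta_t(A)$. $\delta(x_1,\dots,x_n)=\prod_{s<t}(x_t-x_s)$. *)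

From mathcomp Require Import all_boot all_order all_algebra.
Set Implicit Arguments. Unset Strict Implicit. Unset Printing Implicit Defensive.
Import GRing.Theory.
Local Open Scope ring_scope.

(* k-th power of a square matrix, valid for every size n (including n = 0) *)
Definition mxpow (K : fieldType) (n : nat) (A : 'M[K]_n) (k : nat) : 'M[K]_n :=
  iter k (mulmx A) 1%:M.

(* M_t(A): its j-th column (0-indexed) is the t-th column of A^j *)
Definition Mt (K : fieldType) (n : nat) (A : 'M[K]_n) (t : 'I_n) : 'M[K]_n :=
  \matrix_(i < n, j < n) mxpow A j i t.

Definition Delta_t (K : fieldType) (n : nat) (A : 'M[K]_n) (t : 'I_n) : K :=
  \det (Mt A t).

Definition Delta (K : fieldType) (n : nat) (A : 'M[K]_n) : K :=
  \prod_(t < n) Delta_t A t.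

Definition vdelta (K : fieldType) (n : nat) (a : 'I_n -> K) : K :=
  \prod_(t < n) \prod_(s < n | (s < t)%N) (a t - a s).

From mathcomp Require Import all_boot all_order all_algebra.
Import GRing.Theory.
Local Open Scope ring_scope.

(* Since A^j = P^-1 L^j P with L = diag(a), the t-th column of A^j is P^-1
   applied to the vector (a_s^j p_st)_s.  Hence M_t(A) = P^-1 diag(p_.t) V^T,
   where V is the Vandermonde matrix of a, and the determinant of M_t(A)
   factors as det P^-1 * prod_s p_st * delta(a). *)

Lemma mxpow_conj (K : fieldType) (n : nat) (P D : 'M[K]_n) (k : nat) :
  P \in unitmx -> mxpow (invmx P *m D *m P) k = invmx P *m D ^+ k *m P.
Proof.
move=> Punit; rewrite /mxpow; elim: k => [|k IHk] /=.
  by rewrite expr0 mulmx1 mulVmx.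
rewrite IHk exprS !mulmxA; congr (_ *m _).
by rewrite -(mulmxA _ P) mulmxV // mulmx1 -!mulmxA.
Qed.

Lemma diag_mx_exp (R : pzSemiRingType) (n : nat) (d : 'rV[R]_n) (k : nat) :
  diag_mx d ^+ k = diag_mx (\row_i d 0 i ^+ k).
Proof.
elim: k => [|k IHk]; first by apply/matrixP => i j; rewrite expr0 !mxE.
rewrite exprS IHk [_ * _]mulmx_diag.
by congr diag_mx; apply/rowP => i; rewrite !mxE exprS.
Qed.

Lemma vdelta_Vandermonde (K : fieldType) (n : nat) (a : 'I_n -> K) :
  vdelta a = \det (Vandermonde n (\row_i a i)).
Proof.
rewrite det_Vandermonde /vdelta (exchange_big_dep xpredT) //=.
by apply: eq_bigr => s _; apply: eq_bigr => t _; rewrite !mxE.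
Qed.

Lemma Mt_conj_diag (K : fieldType) (n : nat) (a : 'I_n -> K) (P : 'M[K]_n)
    (t : 'I_n) : P \in unitmx ->
  Mt (invmx P *m diag_mx (\row_i a i) *m P) t =
  invmx P *m (diag_mx (\row_s P s t) *m (Vandermonde n (\row_i a i))^T).
Proof.
move=> Punit; apply/matrixP => i j.
rewrite mxE mxpow_conj // diag_mx_exp -mulmxA !mul_diag_mx !mxE.
by apply: eq_bigr => s _; rewrite !mxE [P s t * _]mulrC.
Qed.

Lemma Delta_t_conj_diag (K : fieldType) (n : nat) (a : 'I_n -> K)
    (P : 'M[K]_n) (t : 'I_n) : P \in unitmx ->
  Delta_t (invmx P *m diag_mx (\row_i a i) *m P) t =
  vdelta a * (\det P)^-1 * \prod_(s < n) P s t.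
Proof.
move=> Punit; rewrite /Delta_t Mt_conj_diag // !det_mulmx det_inv det_diag.
rewrite det_tr -vdelta_Vandermonde (eq_bigr (fun s => P s t)) => [|s _].
  by rewrite mulrCA mulrC [_^-1 * _]mulrC.
by rewrite mxE.
Qed.

Theorem mainTheorem4 (K : fieldType) (n : nat) (a : 'I_n -> K)
  (P : 'M[K]_n) (HP : P \in unitmx) :
  let A := invmx P *m diag_mx (\row_i a i) *m P in
  (forall t : 'I_n,
     Delta_t A t = vdelta a * (\det P)^-1 * \prod_(s < n) P s t) /\
  Delta A = vdelta a ^+ n * ((\det P) ^+ n)^-1 *
            \prod_(s < n) \prod_(t < n) P s t.
Proof.
move=> A; split=> [t|]; first exact: Delta_t_conj_diag.
rewrite /Delta; under eq_bigr do rewrite Delta_t_conj_diag //.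
by rewrite !big_split /= !prodr_const card_ord exprVn [in RHS]exchange_big.
Qed.
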